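(* Let $S$ be a consistent approximate subdivision, $e[a,b]\in S$, $p\in L(e)$ and $q\in U(e)$, and suppose $p\notin\{a,b\}$ or $q\notin\{a,b\}$. If $e$ is increasing or horizontal then $p^{+-}\cap q^{-+}=\emptyset$; if $e$ is decreasing or horizontal then $p^{--}\cap q^{++}=\emptyset$.
   Context: Points $p\in\mathbb{R}^2$ have coordinates $(p_x,p_y)$. A curve is an open, bounded, piecewise-algebraic arc that is both $x$-monotone and $y$-monotone; a curve with endpoints $a,b$ where $a_x\le b_x$ is written $e[a,b]$. It is vertical if $a_x=b_x$; a non-vertical curve is horizontal if $a_y=b_y$, increasing if $a_y<b_y$, decreasing if $a_y>b_y$. Sets $s,t$ overlap in $x$ if there exist $p\in s$, $q\in t$ with $p_x=q_x$. An approximate subdivision is a set $S$ of curves together with a binary relation $\prec_y$ on $S$ whose transitive closure is irreflexive, such that for $e,f\in S$: $e\prec_y f$ or $f\prec_y e$ holds iff $e$ and $f$ overlap in $x$. Write $e\preceq_y f$ for ($e\prec_y f$ or $e=f$), and $e\succ_y f$, $e\succeq_y f$ for $f\prec_y e$, $f\preceq_y e$. For $e[a,b]\in S$, $L(e)$ is the set of endpoints $p$ of curves $f\in S$ with $f\preceq_y e$ and $a_x\le p_x\le b_x$; $U(e)$ is defined likewise with $f\succeq_y e$. $S$ is consistent if every curve $e[a,b]\in S$ satisfies: (1) for each $q\in U(e)$ there is no $p\in L(e)$ with $a_x<p_x=q_x<b_x$ and $p_y\ge q_y$; (2) for each $f[c,d]\in S$ with $f\succ_y e$: $a_x=c_x$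 implies $a_y\le c_y$, and $b_x=d_x$ implies $b_y\le d_y$; (3a) for each $p\in L(e)$ there are no $c,d\in U(e)$ with $c_x<p_x<d_x$ and $c_y,d_y\le p_y$; (3b) for each $q\in U(e)$ there are no $c,d\in L(e)$ with $c_x<q_x<d_x$ and $c_y,d_y\ge q_y$; (4) if $e$ is vertical, there is no endpoint $p$ of any curve $f\in S$ with $p_x=a_x$ and $p_y$ strictly between $a_y$ and $b_y$. For a point $p$: $p^{++}=[p_x,\infty)\times[p_y,\infty)$, $p^{-+}=(-\infty,p_x]\times[p_y,\infty)$, $p^{+-}=[p_x,\infty)\times(-\infty,p_y]$, $p^{--}=(-\infty,p_x]\times(-\infty,p_y]$. *)

From Stdlib Require Import Reals Relations.
Open Scope R_scope.

Definition point := (R * R)%type.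
Definition px (p : point) : R := fst p.
Definition py (p : point) : R := snd p.

(* A curve is represented abstractly by an element of a type C, with its
   left endpoint [src e] = a and right endpoint [tgt e] = b (a_x <= b_x).
   An open x- and y-monotone arc e[a,b] projects onto the x-axis as the
   open interval (a_x, b_x) if non-c_vertical, and as {a_x} if c_vertical. *)
Definition in_xproj (a b : point) (x : R) : Prop :=
  (px a = px b /\ x = px a) \/ (px a < x < px b).

Definition overlap_x (a b c d : point) : Prop :=
  exists x, in_xproj a b x /\ in_xproj c d x.

Definition c_vertical (a b : point) : Prop := px a = px b.
Definition c_horizontal (a b : point) : Prop := px a <> px b /\ py a = py b.
Definition c_increasing (a b : point) : Prop := px a <> px b /\ py a < py b.
Definition c_decreasing (a b : point) : Prop := px a <> px b /\ py a > py b.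

(* Approximate subdivision: set of curves C (every element of C is in S),
   with endpoints src/tgt and relation prec (= ≺_y). *)
Definition approx_subdivision {C : Type} (src tgt : C -> point)
  (prec : C -> C -> Prop) : Prop :=
  (forall e, px (src e) <= px (tgt e) /\ src e <> tgt e) /\
  (forall e, ~ clos_trans C prec e e) /\
  (forall e f, e <> f ->
     ((prec e f \/ prec f e) <-> overlap_x (src e) (tgt e) (src f) (tgt f))).

Definition preceq {C : Type} (prec : C -> C -> Prop) (e f : C) : Prop :=
  prec e f \/ e = f.

Definition is_endpoint {C : Type} (src tgt : C -> point) (f : C) (p : point) :=
  p = src f \/ p = tgt f.

Definition Lset {C : Type} (src tgt : C -> point) (prec : C -> C -> Prop)
  (e : C) (p : point) : Prop :=
  exists f, preceq prec f e /\ is_endpoint src tgt f p /\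
    px (src e) <= px p <= px (tgt e).

Definition Uset {C : Type} (src tgt : C -> point) (prec : C -> C -> Prop)
  (e : C) (p : point) : Prop :=
  exists f, preceq prec e f /\ is_endpoint src tgt f p /\
    px (src e) <= px p <= px (tgt e).

Definition consistent {C : Type} (src tgt : C -> point)
  (prec : C -> C -> Prop) : Prop :=
  approx_subdivision src tgt prec /\
  forall e : C, let a := src e in let b := tgt e in
  (forall q, Uset src tgt prec e q ->
     ~ exists p, Lset src tgt prec e p /\
         px a < px p /\ px p = px q /\ px q < px b /\ py p >= py q) /\
  (forall f, prec e f ->
     (px a = px (src f) -> py a <= py (src f)) /\
     (px b = px (tgt f) -> py b <= py (tgt f))) /\
  (forall p, Lset src tgt prec e p ->
     ~ exists c d, Uset src tgt prec e c /\ Uset src tgt prec e d /\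
         px c < px p < px d /\ py c <= py p /\ py d <= py p) /\
  (forall q, Uset src tgt prec e q ->
     ~ exists c d, Lset src tgt prec e c /\ Lset src tgt prec e d /\
         px c < px q < px d /\ py c >= py q /\ py d >= py q) /\
  (c_vertical a b ->
     ~ exists f p, is_endpoint src tgt f p /\ px p = px a /\
         ((py a < py p < py b) \/ (py b < py p < py a))).

Definition qPP (p z : point) : Prop := px p <= px z /\ py p <= py z.
Definition qMP (p z : point) : Prop := px z <= px p /\ py p <= py z.
Definition qPM (p z : point) : Prop := px p <= px z /\ py z <= py p.
Definition qMM (p z : point) : Prop := px z <= px p /\ py z <= py p.

Definition qdisjoint (A B : point -> Prop) : Prop := ~ exists z, A z /\ B z.

From Stdlib Require Import Reals Relations Lra.
Open Scope R_scope.

(* Fix a consistent subdivision and a non-vertical curve e[a,b].  We package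
   these into the notion of a [window] and prove the separation statement as
   a purely planar argument about windows: a point z in p^{+-} ∩ q^{-+} (or in
   p^{--} ∩ q^{++}) forces p and q into a configuration forbidden by (1),
   (3a) or (3b), unless p and q are both endpoints of e. *)

Lemma pt_eq (p q : point) : px p = px q -> py p = py q -> p = q.
Proof. destruct p, q; unfold px, py; simpl; intros -> ->; reflexivity. Qed.

Lemma overlap_bounds (a b c d : point) :
  px c <= px d -> px a < px b -> overlap_x c d a b ->
  px a < px d /\ px c < px b.
Proof.
  intros Hcd Hab [x [Hx Hy]]; unfold in_xproj in *.
  destruct Hx as [[? ?] | [? ?]]; destruct Hy as [[? ?] | [? ?]]; lra.
Qed.

Section Endpoints.

Context {C : Type} (src tgt : C -> point) (prec : C -> C -> Prop).
Hypothesis Hsub : approx_subdivision src tgt prec.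

Lemma prec_neq (f e : C) : prec f e \/ prec e f -> f <> e.
Proof.
  destruct Hsub as [_ [Hirr _]].
  intros [Hp | Hp] ->; apply (Hirr e); now apply t_step.
Qed.

Lemma comparable_overlap (f e : C) :
  prec f e \/ prec e f -> overlap_x (src f) (tgt f) (src e) (tgt e).
Proof.
  intros Hp; destruct Hsub as [_ [_ Hov]].
  apply (Hov f e (prec_neq f e Hp)); exact Hp.
Qed.

Lemma endpoint_at_left (e f : C) (p : point) :
  px (src e) < px (tgt e) -> f = e \/ prec f e \/ prec e f ->
  is_endpoint src tgt f p -> px p = px (src e) -> p = src f.
Proof.
  intros Hab Hf [-> | ->] Hpx; [reflexivity |].
  exfalso; destruct Hf as [-> | Hf]; [lra |].
  pose proof (proj1 (proj1 Hsub f)) as Hfw.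
  destruct (overlap_bounds _ _ _ _ Hfw Hab (comparable_overlap f e Hf)); lra.
Qed.

Lemma endpoint_at_right (e f : C) (p : point) :
  px (src e) < px (tgt e) -> f = e \/ prec f e \/ prec e f ->
  is_endpoint src tgt f p -> px p = px (tgt e) -> p = tgt f.
Proof.
  intros Hab Hf [-> | ->] Hpx; [| reflexivity].
  exfalso; destruct Hf as [-> | Hf]; [lra |].
  pose proof (proj1 (proj1 Hsub f)) as Hfw.
  destruct (overlap_bounds _ _ _ _ Hfw Hab (comparable_overlap f e Hf)); lra.
Qed.

End Endpoints.

Section Consistent.

Context {C : Type} (src tgt : C -> point) (prec : C -> C -> Prop).
Hypothesis Hcons : consistent src tgt prec.

Lemma order_endpoints (f g : C) : prec f g ->
  (px (src f) = px (src g) -> py (src f) <= py (src g)) /\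
  (px (tgt f) = px (tgt g) -> py (tgt f) <= py (tgt g)).
Proof. destruct Hcons as [_ Hall]; destruct (Hall f) as [_ [H2 _]]; auto. Qed.

Lemma L_left (e : C) : px (src e) < px (tgt e) -> forall p : point,
  Lset src tgt prec e p -> px p = px (src e) -> py p <= py (src e).
Proof.
  intros Hab p [f [Hf [Hp _]]] Hpx.
  assert (Hfe : f = e \/ prec f e \/ prec e f) by (destruct Hf as [? | ->]; tauto).
  pose proof (endpoint_at_left src tgt prec (proj1 Hcons) e f p Hab Hfe Hp Hpx) as ->.
  destruct Hf as [Hf | ->]; [exact (proj1 (order_endpoints f e Hf) Hpx) | lra].
Qed.

Lemma L_right (e : C) : px (src e) < px (tgt e) -> forall p : point,
  Lset src tgt prec e p -> px p = px (tgt e) -> py p <= py (tgt e).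
Proof.
  intros Hab p [f [Hf [Hp _]]] Hpx.
  assert (Hfe : f = e \/ prec f e \/ prec e f) by (destruct Hf as [? | ->]; tauto).
  pose proof (endpoint_at_right src tgt prec (proj1 Hcons) e f p Hab Hfe Hp Hpx) as ->.
  destruct Hf as [Hf | ->]; [exact (proj2 (order_endpoints f e Hf) Hpx) | lra].
Qed.

Lemma U_left (e : C) : px (src e) < px (tgt e) -> forall q : point,
  Uset src tgt prec e q -> px q = px (src e) -> py (src e) <= py q.
Proof.
  intros Hab q [f [Hf [Hq _]]] Hqx.
  assert (Hfe : f = e \/ prec f e \/ prec e f) by (destruct Hf as [? | ->]; tauto).
  pose proof (endpoint_at_left src tgt prec (proj1 Hcons) e f q Hab Hfe Hq Hqx) as ->.
  destruct Hf as [Hf | <-]; [exact (proj1 (order_endpoints e f Hf) (eq_sym Hqx)) | lra].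
Qed.

Lemma U_right (e : C) : px (src e) < px (tgt e) -> forall q : point,
  Uset src tgt prec e q -> px q = px (tgt e) -> py (tgt e) <= py q.
Proof.
  intros Hab q [f [Hf [Hq _]]] Hqx.
  assert (Hfe : f = e \/ prec f e \/ prec e f) by (destruct Hf as [? | ->]; tauto).
  pose proof (endpoint_at_right src tgt prec (proj1 Hcons) e f q Hab Hfe Hq Hqx) as ->.
  destruct Hf as [Hf | <-]; [exact (proj2 (order_endpoints e f Hf) (eq_sym Hqx)) | lra].
Qed.

End Consistent.

(* The planar data that consistency provides around a non-vertical curve
   e[a,b]: L plays the role of L(e), U of U(e). *)
Record window (L U : point -> Prop) (a b : point) : Prop := {
  win_nonvertical : px a < px b;
  win_a_L : L a;
  win_b_L : L b;
  win_a_U : U a;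
  win_b_U : U b;
  win_L_range : forall p, L p -> px a <= px p <= px b;
  win_U_range : forall q, U q -> px a <= px q <= px b;
  win_above : forall p q, L p -> U q ->
    px a < px p -> px p = px q -> px q < px b -> py p < py q;
  win_no_L_peak : forall p c d, L p -> U c -> U d ->
    px c < px p < px d -> py c <= py p -> py d <= py p -> False;
  win_no_U_dip : forall q c d, U q -> L c -> L d ->
    px c < px q < px d -> py q <= py c -> py q <= py d -> False;
  (* consequences of condition (2) *)
  win_L_left : forall p, L p -> px p = px a -> py p <= py a;
  win_L_right : forall p, L p -> px p = px b -> py p <= py b;
  win_U_left : forall q, U q -> px q = px a -> py a <= py q;
  win_U_right : forall q, U q -> px q = px b -> py b <= py q
}.

Section Window.

Variables (L U : point -> Prop) (a b : point).
Hypothesis W : window L U a b.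

Lemma window_same_x (p q : point) : L p -> U q ->
  px p = px q -> py q <= py p -> p = q /\ (p = a \/ p = b).
Proof.
  intros Lp Uq Hx Hy; destruct (win_L_range _ _ _ _ W p Lp).
  destruct (Req_dec (px p) (px a)) as [Ha | Ha].
  - pose proof (win_L_left _ _ _ _ W p Lp Ha).
    pose proof (win_U_left _ _ _ _ W q Uq (eq_trans (eq_sym Hx) Ha)).
    split; [| left]; apply pt_eq; lra.
  - destruct (Req_dec (px p) (px b)) as [Hb | Hb].
    + pose proof (win_L_right _ _ _ _ W p Lp Hb).
      pose proof (win_U_right _ _ _ _ W q Uq (eq_trans (eq_sym Hx) Hb)).
      split; [| right]; apply pt_eq; lra.
    + pose proof (win_above _ _ _ _ W p q Lp Uq ltac:(lra) Hx ltac:(lra)); lra.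
Qed.

Lemma window_increasing (p q : point) : py a <= py b -> L p -> U q ->
  (p <> a /\ p <> b) \/ (q <> a /\ q <> b) ->
  px p <= px q -> py q <= py p -> False.
Proof.
  intros Hab Lp Uq Hnd Hx Hy.
  destruct (win_L_range _ _ _ _ W p Lp), (win_U_range _ _ _ _ W q Uq).
  destruct (Rle_lt_or_eq_dec _ _ Hx) as [Hpq | Hpq].
  2: { destruct (window_same_x p q Lp Uq Hpq Hy) as [<- [-> | ->]]; tauto. }
  destruct (Req_dec (px p) (px a)) as [Ha | Ha].
  - (* p sits below a, hence below b: q is a U-dip unless p = a, q = b *)
    pose proof (win_L_left _ _ _ _ W p Lp Ha).
    destruct (Req_dec (px q) (px b)) as [Hb | Hb].
    + pose proof (win_U_right _ _ _ _ W q Uq Hb).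
      assert (p = a) by (apply pt_eq; lra).
      assert (q = b) by (apply pt_eq; lra).
      subst; tauto.
    + apply (win_no_U_dip _ _ _ _ W q p b Uq Lp (win_b_L _ _ _ _ W)); lra.
  - destruct (Rle_lt_dec (py b) (py q)).
    + (* p is an L-peak between a and q *)
      apply (win_no_L_peak _ _ _ _ W p a q Lp (win_a_U _ _ _ _ W) Uq); lra.
    + (* q is a U-dip between p and b *)
      assert (px q <> px b) by (intro Hb; pose proof (win_U_right _ _ _ _ W q Uq Hb); lra).
      apply (win_no_U_dip _ _ _ _ W q p b Uq Lp (win_b_L _ _ _ _ W)); lra.
Qed.

Lemma window_decreasing (p q : point) : py b <= py a -> L p -> U q ->
  (p <> a /\ p <> b) \/ (q <> a /\ q <> b) ->
  px q <= px p -> py q <= py p -> False.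
Proof.
  intros Hba Lp Uq Hnd Hx Hy.
  destruct (win_L_range _ _ _ _ W p Lp), (win_U_range _ _ _ _ W q Uq).
  destruct (Rle_lt_or_eq_dec _ _ Hx) as [Hqp | Hqp].
  2: { destruct (window_same_x p q Lp Uq (eq_sym Hqp) Hy) as [<- [-> | ->]]; tauto. }
  destruct (Req_dec (px p) (px b)) as [Hb | Hb].
  - (* p sits below b, hence below a: q is a U-dip unless q = a, p = b *)
    pose proof (win_L_right _ _ _ _ W p Lp Hb).
    destruct (Req_dec (px q) (px a)) as [Ha | Ha].
    + pose proof (win_U_left _ _ _ _ W q Uq Ha).
      assert (p = b) by (apply pt_eq; lra).
      assert (q = a) by (apply pt_eq; lra).
      subst; tauto.
    + apply (win_no_U_dip _ _ _ _ W q a p Uq (win_a_L _ _ _ _ W) Lp); lra.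
  - destruct (Rle_lt_dec (py a) (py q)).
    + (* p is an L-peak between q and b *)
      apply (win_no_L_peak _ _ _ _ W p q b Lp Uq (win_b_U _ _ _ _ W)); lra.
    + (* q is a U-dip between a and p *)
      assert (px q <> px a) by (intro Ha; pose proof (win_U_left _ _ _ _ W q Uq Ha); lra).
      apply (win_no_U_dip _ _ _ _ W q a p Uq (win_a_L _ _ _ _ W) Lp); lra.
Qed.

End Window.

Lemma consistent_window {C : Type} (src tgt : C -> point)
  (prec : C -> C -> Prop) (e : C) :
  consistent src tgt prec -> px (src e) < px (tgt e) ->
  window (Lset src tgt prec e) (Uset src tgt prec e) (src e) (tgt e).
Proof.
  intros Hcons Hab.
  pose proof Hcons as [_ Hall].
  destruct (Hall e) as [H1 [_ [H3a [H3b _]]]].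
  assert (Hend : forall p, is_endpoint src tgt e p ->
    Lset src tgt prec e p /\ Uset src tgt prec e p).
  { intros p Hp; split; exists e; repeat split; try (right; reflexivity); auto;
      destruct Hp as [-> | ->]; lra. }
  split.
  - exact Hab.
  - exact (proj1 (Hend _ (or_introl eq_refl))).
  - exact (proj1 (Hend _ (or_intror eq_refl))).
  - exact (proj2 (Hend _ (or_introl eq_refl))).
  - exact (proj2 (Hend _ (or_intror eq_refl))).
  - intros p [f [_ [_ Hx]]]; exact Hx.
  - intros q [f [_ [_ Hx]]]; exact Hx.
  - intros p q Lp Uq ? ? ?; apply Rnot_le_lt; intro.
    apply (H1 q Uq); exists p; repeat split; auto; lra.
  - intros p c d Lp Uc Ud ? ? ?; apply (H3a p Lp); exists c, d; auto.
  - intros q c d Uq Lc Ld ? ? ?; apply (H3b q Uq); exists c, d; repeat split; auto; lra.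
  - exact (L_left src tgt prec Hcons e Hab).
  - exact (L_right src tgt prec Hcons e Hab).
  - exact (U_left src tgt prec Hcons e Hab).
  - exact (U_right src tgt prec Hcons e Hab).
Qed.

Theorem lemma4 (C : Type) (src tgt : C -> point) (prec : C -> C -> Prop)
  (e : C) (p q : point) :
  consistent src tgt prec ->
  Lset src tgt prec e p ->
  Uset src tgt prec e q ->
  ((p <> src e /\ p <> tgt e) \/ (q <> src e /\ q <> tgt e)) ->
  ((c_increasing (src e) (tgt e) \/ c_horizontal (src e) (tgt e)) ->
     qdisjoint (qPM p) (qMP q)) /\
  ((c_decreasing (src e) (tgt e) \/ c_horizontal (src e) (tgt e)) ->
     qdisjoint (qMM p) (qPP q)).
Proof.
  intros Hcons HL HU Hnd.
  pose proof (proj1 (proj1 (proj1 Hcons) e)) as Hle.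
  unfold c_increasing, c_decreasing, c_horizontal.
  split; intros Hshape [z [[? ?] [? ?]]].
  - assert (Hab : px (src e) < px (tgt e) /\ py (src e) <= py (tgt e))
      by (destruct Hshape as [[? ?] | [? ?]]; split; lra).
    apply (window_increasing _ _ _ _ (consistent_window src tgt prec e Hcons (proj1 Hab))
             p q (proj2 Hab) HL HU Hnd); lra.
  - assert (Hba : px (src e) < px (tgt e) /\ py (tgt e) <= py (src e))
      by (destruct Hshape as [[? ?] | [? ?]]; split; lra).
    apply (window_decreasing _ _ _ _ (consistent_window src tgt prec e Hcons (proj1 Hba))
             p q (proj2 Hba) HL HU Hnd); lra.
Qed.
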